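(* Let $\lambda$ be an infinite cardinal with $\lambda=\lambda^{\aleph_0}>|R|$, let $T$ be the set of all finite sequences $\tau\colon n\to\lambda$ ($n\in\omega$), and let $E=\bigoplus_{\tau\in T}R\tau$ be the free $R$-module with basis $T$. Let $H$ be a cotorsion-free $R$-module of cardinality less than $\lambda$, let $\widehat E$, $\widehat H$ be the $\mathbb S$-adic completions and $\widehat B=\widehat E\oplus\widehat H$, and let $\pi\colon\widehat B\to\widehat H$ be the canonical projection with kernel $\widehat E$. Let $H'\subseteq H$ be a pure submodule, $E'$ a direct summand of $E$, and let $\varphi\colon\mathrm{Dom}(\varphi)\to\widehat E\oplus H$ be an $R$-homomorphism defined on a submodule $\mathrm{Dom}(\varphi)$ with $E'\subseteq\mathrm{Dom}(\varphi)\subseteq\widehat E\oplus H'$, both inclusions pure, and $\pi(\mathrm{Dom}(\varphi))=H'$. Then $\varphi$ has a unique extension to an $R$-homomorphism $\widehat\varphi\colon\widehat{E'}\oplus H'\to\widehat E\oplus\widehat H=\widehat B$.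
   Context: Standing setting: $R$ is a commutative ring with $1$ with a distinguished countable multiplicatively closed subset $\mathbb S=\{s_n:n\in\omega\}$ such that $R$ is $\mathbb S$-reduced and $\mathbb S$-torsion-free and cotorsion-free. $\widehat R$ and $\widehat M$ denote $\mathbb S$-adic completions (topology with neighbourhoods of zero $q_mM$, $q_m=\prod_{n<m}s_n$). An $R$-module $M$ is cotorsion-free if $\mathrm{Hom}_R(\widehat R,M)=0$. A submodule $N\subseteq M$ is pure if $sM\cap N=sN$ for all $s\in\mathbb S$. *)

From mathcomp Require Import all_boot all_order all_algebra.
Set Implicit Arguments. Unset Strict Implicit. Unset Printing Implicit Defensive.
Import GRing.Theory.
Local Open Scope ring_scope.

(* Setting: R commutative ring, S = {s n : n in nat} countable, multiplic-   *)
(* atively closed.  q m = prod_{n<m} s n.  The S-adic completion of a module *)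
(* M is represented (Bishop/setoid style) by S-adic Cauchy sequences         *)
(* nat -> M modulo the relation [ceq] of having S-adic limit-difference 0;   *)
(* this is exactly the inverse limit  lim M / q_m M.                          *)

Section SadicDefs.
Variables (R : comPzRingType) (s : nat -> R).

Definition qS (m : nat) : R := \prod_(n < m) s n.

Definition mult_closed_seq : Prop :=
  (exists n, s n = 1) /\ (forall n m, exists k, s n * s m = s k).

Definition S_torsion_free (M : lmodType R) : Prop :=
  forall n (x : M), s n *: x = 0 -> x = 0.

Definition S_reduced (M : lmodType R) : Prop :=
  forall x : M, (forall n, exists y, x = s n *: y) -> x = 0.

Definition is_submod (M : lmodType R) (P : M -> Prop) : Prop :=
  P 0 /\ (forall x y, P x -> P y -> P (x + y)) /\
  (forall (r : R) x, P x -> P (r *: x)).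

Definition pure_submod (M : lmodType R) (N : M -> Prop) : Prop :=
  is_submod N /\
  forall n (x : M), N x -> (exists y : M, x = s n *: y) ->
    exists y, N y /\ x = s n *: y.

Definition direct_summand (M : lmodType R) (P : M -> Prop) : Prop :=
  is_submod P /\ exists Q : M -> Prop, is_submod Q /\
    (forall x, P x -> Q x -> x = 0) /\
    (forall x, exists a b, P a /\ Q b /\ x = a + b).

Definition in_qM (M : lmodType R) (k : nat) (x : M) : Prop :=
  exists y : M, x = qS k *: y.

Definition cauchy (M : lmodType R) (x : nat -> M) : Prop :=
  forall k, exists N, forall n m, (N <= n)%N -> (N <= m)%N -> in_qM k (x n - x m).

Definition ceq (M : lmodType R) (x y : nat -> M) : Prop :=
  forall k, exists N, forall n, (N <= n)%N -> in_qM k (x n - y n).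

Definition sadd (M : lmodType R) (x y : nat -> M) : nat -> M := fun n => x n + y n.
Definition sscale (M : lmodType R) (r : R) (x : nat -> M) : nat -> M := fun n => r *: x n.
Definition sconst (M : lmodType R) (m : M) : nat -> M := fun _ => m.

Definition csubmod (M : lmodType R) (D : (nat -> M) -> Prop) : Prop :=
  (forall x, D x -> cauchy x) /\
  (forall x y, D x -> cauchy y -> ceq x y -> D y) /\
  D (sconst 0) /\
  (forall x y, D x -> D y -> D (sadd x y)) /\
  (forall r x, D x -> D (sscale r x)).

Definition chom (M N : lmodType R) (D : (nat -> M) -> Prop)
  (f : (nat -> M) -> (nat -> N)) : Prop :=
  (forall x, D x -> cauchy (f x)) /\
  (forall x y, D x -> D y -> ceq x y -> ceq (f x) (f y)) /\
  (forall x y, D x -> D y -> ceq (f (sadd x y)) (sadd (f x) (f y))) /\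
  (forall r x, D x -> ceq (f (sscale r x)) (sscale r (f x))).

Definition cotorsion_free (M : lmodType R) : Prop :=
  forall f : (nat -> R^o) -> M,
    (forall x y, cauchy x -> cauchy y -> ceq x y -> f x = f y) ->
    (forall x y, cauchy x -> cauchy y -> f (sadd x y) = f x + f y) ->
    (forall r x, cauchy x -> f (sscale r x) = r *: f x) ->
    forall x, cauchy x -> f x = 0.

End SadicDefs.

Definition free_basis (R : comPzRingType) (E : lmodType R) (T : eqType)
  (b : T -> E) : Prop :=
  (forall x : E, exists r : seq (R * T), x = \sum_(p <- r) p.1 *: b p.2) /\
  (forall (ts : seq T) (c : T -> R), uniq ts ->
     \sum_(t <- ts) c t *: b t = 0 -> forall t, t \in ts -> c t = 0).

Definition card_lt (A B : Type) : Prop :=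
  (exists f : A -> B, injective f) /\ ~ (exists g : B -> A, injective g).

From mathcomp Require Import all_boot all_order all_algebra zify.
From Stdlib Require Import ClassicalEpsilon.
Import GRing.Theory.
Local Open Scope ring_scope.
Set Implicit Arguments. Unset Strict Implicit.

(* Two facts drive the proof.  Density: since pi (Dom phi) = H' and Dom phi contains
   the summand E' of the S-torsion-free module E, every x in \hat{E'} (+) H' is
   approximated by some d in Dom phi with x - d in q_k (\hat{E'} (+) H').
   Continuity: since Dom phi is pure in \hat E (+) H', d - d' in q_k (\hat E (+) H')
   forces d - d' in q_k Dom phi, hence phi d - phi d' in q_k \hat B.  So the
   extension at x is the S-adic limit of phi d along such approximations, and any
   homomorphic extension psi agrees with it, as psi x - phi d = psi (x - d) lies in
   q_k \hat B. *)

Lemma subr_tri (V : zmodType) (a b c d : V) : a - b = (a - c) + (c - d) - (b - d).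
Proof. by rewrite opprB !addrA !subrK. Qed.

Lemma subrBB (V : zmodType) (x a b : V) : (x - b) - (x - a) = a - b.
Proof. by rewrite opprB addrC addrA subrK. Qed.

Lemma nat_monotone_majorant (C : nat -> nat) :
  exists B : nat -> nat, {homo B : m n / (m <= n)%N} /\ forall n, (C n <= B n)%N.
Proof.
exists (fun n => \sum_(0 <= i < n.+1) C i)%N; split=> [m n hmn | n].
  by rewrite (@big_cat_nat _ _ _ m.+1 0 n.+1) ?ltnS //=; apply: leq_addr.
by rewrite big_nat_recr //=; apply: leq_addl.
Qed.

Section Completion.
Variables (R : comPzRingType) (s : nat -> R).
Local Notation q := (qS s).

Lemma qS_S k : q k.+1 = q k * s k.
Proof. by rewrite /qS big_ord_recr. Qed.

Lemma qS_dvd j k : (j <= k)%N -> exists c, q k = q j * c.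
Proof.
elim: k => [|k IH] hjk.
  by move: hjk; rewrite leqn0 => /eqP ->; exists 1; rewrite mulr1.
case: (leqP j k) => [/IH [c hc] | hkj]; first by exists (c * s k); rewrite qS_S hc mulrA.
have -> : j = k.+1 by apply/eqP; rewrite eqn_leq hjk hkj.
by exists 1; rewrite mulr1.
Qed.

Lemma qS_in_S : mult_closed_seq s -> forall k, exists m, q k = s m.
Proof.
move=> [[n0 s_n0] s_mul]; elim=> [|k [m qk]]; last by rewrite qS_S qk; apply: s_mul.
by exists n0; rewrite s_n0 /qS big_ord0.
Qed.

Section Module.
Variable M : lmodType R.
Implicit Types (x y : M) (u v w : nat -> M).

Lemma in_qM0 k : in_qM s k (0 : M).
Proof. by exists 0; rewrite scaler0. Qed.

Lemma in_qMD k x y : in_qM s k x -> in_qM s k y -> in_qM s k (x + y).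
Proof. by move=> [a ->] [b ->]; exists (a + b); rewrite scalerDr. Qed.

Lemma in_qMZ k r x : in_qM s k x -> in_qM s k (r *: x).
Proof. by move=> [a ->]; exists (r *: a); rewrite !scalerA mulrC. Qed.

Lemma in_qMN k x : in_qM s k x -> in_qM s k (- x).
Proof. by move=> [a ->]; exists (- a); rewrite scalerN. Qed.

Lemma in_qMB k x y : in_qM s k x -> in_qM s k y -> in_qM s k (x - y).
Proof. by move=> hx hy; apply: in_qMD => //; apply: in_qMN. Qed.

Lemma in_qM_le j k x : (j <= k)%N -> in_qM s k x -> in_qM s j x.
Proof. by move=> /qS_dvd [c hc] [a ->]; exists (c *: a); rewrite hc scalerA. Qed.

Definition ev_qM k u := exists N, forall n, (N <= n)%N -> in_qM s k (u n).

Definition ssub u v := sadd u (sscale (-1) v).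

Lemma ssubE u v n : ssub u v n = u n - v n.
Proof. by rewrite /ssub /sadd /sscale scaleN1r. Qed.

Lemma eq_ev_qM k u v : (forall n, u n = v n) -> ev_qM k u -> ev_qM k v.
Proof. by move=> e [N h]; exists N => n hn; rewrite -e; apply: h. Qed.

Lemma ev_qMD k u v : ev_qM k u -> ev_qM k v -> ev_qM k (fun n => u n + v n).
Proof.
move=> [N1 h1] [N2 h2]; exists (maxn N1 N2) => n; rewrite geq_max => /andP[n1 n2].
by apply: in_qMD; [apply: h1 | apply: h2].
Qed.

Lemma ev_qMZ k r u : ev_qM k u -> ev_qM k (fun n => r *: u n).
Proof. by move=> [N h]; exists N => n hn; apply/in_qMZ/h. Qed.

Lemma ev_qMN k u : ev_qM k u -> ev_qM k (fun n => - u n).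
Proof. by move=> [N h]; exists N => n hn; apply/in_qMN/h. Qed.

Lemma ceq_refl u : ceq s u u.
Proof. by move=> k; exists 0%N => n _; rewrite subrr; apply: in_qM0. Qed.

Lemma ceq_sym u v : ceq s u v -> ceq s v u.
Proof. by move=> h k; apply: eq_ev_qM (ev_qMN (h k)) => n; apply: opprB. Qed.

Lemma ceq_trans u v w : ceq s u v -> ceq s v w -> ceq s u w.
Proof.
by move=> h1 h2 k; apply: eq_ev_qM (ev_qMD (h1 k) (h2 k)) => n; rewrite addrA subrK.
Qed.

Lemma ceq_eventually u v : (exists N, forall n, (N <= n)%N -> u n = v n) -> ceq s u v.
Proof. by move=> [N h] k; exists N => n hn; rewrite h // subrr; apply: in_qM0. Qed.

Lemma ceq_pointwise u v : (forall n, u n = v n) -> ceq s u v.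
Proof. by move=> h; apply: ceq_eventually; exists 0%N. Qed.

Lemma ceqD u u' v v' : ceq s u u' -> ceq s v v' -> ceq s (sadd u v) (sadd u' v').
Proof.
move=> h1 h2 k; apply: eq_ev_qM (ev_qMD (h1 k) (h2 k)) => n.
by rewrite /sadd opprD addrACA.
Qed.

Lemma ceqZ r u u' : ceq s u u' -> ceq s (sscale r u) (sscale r u').
Proof. by move=> h k; apply: eq_ev_qM (ev_qMZ r (h k)) => n; apply: scalerBr. Qed.

Lemma ceq_ssub u u' v v' : ceq s u u' -> ceq s v v' -> ceq s (ssub u v) (ssub u' v').
Proof. by move=> h1 h2; apply: ceqD => //; apply: ceqZ. Qed.

Lemma ev_qM_ceq k u v : ev_qM k u -> ceq s u v -> ev_qM k v.
Proof.
move=> hu huv; apply: eq_ev_qM (ev_qMD hu (ev_qMN (huv k))) => n.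
by rewrite opprB addrC subrK.
Qed.

Lemma ev_qM_ceq_scale k u w : ceq s u (sscale (q k) w) -> ev_qM k u.
Proof.
move=> h; apply: ev_qM_ceq (ceq_sym h).
by exists 0%N => n _; exists (w n).
Qed.

Lemma cauchy_const x : cauchy s (sconst x).
Proof. by move=> k; exists 0%N => n m _ _; rewrite /sconst subrr; apply: in_qM0. Qed.

Lemma cauchyD u v : cauchy s u -> cauchy s v -> cauchy s (sadd u v).
Proof.
move=> hu hv k; case: (hu k) (hv k) => N1 e1 [N2 e2].
exists (maxn N1 N2) => n m; rewrite !geq_max => /andP[n1 n2] /andP[m1 m2].
by rewrite /sadd opprD addrACA; apply: in_qMD; [apply: e1 | apply: e2].
Qed.

Lemma cauchyZ r u : cauchy s u -> cauchy s (sscale r u).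
Proof.
move=> h k; case: (h k) => N e; exists N => n m hn hm.
by rewrite /sscale -scalerBr; apply/in_qMZ/e.
Qed.

Lemma cauchy_diagonal_limit (f : nat -> nat -> M) :
  (forall k, cauchy s (f k)) -> (forall k, ev_qM k (fun m => f k.+1 m - f k m)) ->
  exists v, cauchy s v /\ forall k, ev_qM k (fun m => v m - f k m).
Proof.
move=> f_cauchy f_step.
have [C hC] := choice _ (fun k => f_cauchy k k).
have [D hD] := choice _ f_step.
have [B [B_mono hB]] := nat_monotone_majorant (fun n => C n + D n)%N.
have telescope k n m : (k <= n)%N -> (B n <= m)%N -> in_qM s k (f n m - f k m).
  elim: n => [|n IH]; first by rewrite leqn0 => /eqP-> _; rewrite subrr; apply: in_qM0.
  rewrite leq_eqVlt ltnS => /orP[/eqP-> _ | kn Bm]; first by rewrite subrr; apply: in_qM0.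
  have Bn : (B n <= m)%N by apply: leq_trans Bm; apply: B_mono.
  rewrite -[f n.+1 m](subrK (f n m)) -addrA; apply: in_qMD; last exact: IH.
  apply: in_qM_le kn _; apply: hD; apply: leq_trans Bn.
  by have := hB n; lia.
pose v n := f n (B n).
have v_near k n : (k <= n)%N -> (C k <= n)%N -> in_qM s k (v n - f k n).
  move=> kn Ckn; pose m := maxn (B n) n.
  have [Bm nm] : (B n <= m)%N /\ (n <= m)%N by rewrite leq_maxl leq_maxr.
  have CBn : (C n <= B n)%N by have := hB n; lia.
  have -> : v n - f k n = (f n (B n) - f n m) + (f n m - f k m) + (f k m - f k n).
    by rewrite !addrA !subrK.
  apply: in_qMD; first apply: in_qMD.
  - by apply: in_qM_le kn _; apply: hC => //; apply: leq_trans Bm.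
  - exact: telescope.
  - by apply: hC => //; apply: leq_trans nm.
exists v; split=> k; last by exists (maxn k (C k)) => n; rewrite geq_max => /andP[]; apply: v_near.
exists (maxn k (C k)) => n m; rewrite !geq_max => /andP[kn Cn] /andP[km Cm].
rewrite (subr_tri _ _ (f k n) (f k m)).
by apply: in_qMB; first apply: in_qMD; [apply: v_near | apply: hC | apply: v_near].
Qed.

Lemma cauchy_divq (hS : mult_closed_seq s) (htf : S_torsion_free s M) k N u a :
  (forall n, (N <= n)%N -> u n = q k *: a n) -> cauchy s u -> cauchy s a.
Proof.
move=> u_div u_cauchy j.
have [[m1 q_k] [m2 q_j]] := (qS_in_S hS k, qS_in_S hS j).
have [p s_p] := hS.2 m1 m2.
have [N' hN'] := u_cauchy p.+1.
exists (maxn N N') => n m; rewrite !geq_max => /andP[Nn N'n] /andP[Nm N'm].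
have [w ew] := hN' n m N'n N'm.
exists (q p *: w); apply/eqP; rewrite -subr_eq0; apply/eqP; apply: (htf m1).
rewrite -q_k !scalerBr -u_div // -u_div // ew qS_S !scalerA.
by rewrite mulrA q_k q_j s_p mulrC subrr.
Qed.

End Module.

Lemma chom_cauchy (M N : lmodType R) D (f : (nat -> M) -> nat -> N) x :
  chom s D f -> D x -> cauchy s (f x).
Proof. by move=> [h _]; apply: h. Qed.

Lemma chom_ceq (M N : lmodType R) D (f : (nat -> M) -> nat -> N) x y :
  chom s D f -> D x -> D y -> ceq s x y -> ceq s (f x) (f y).
Proof. by move=> [_ [h _]]; apply: h. Qed.

Lemma chom_add (M N : lmodType R) D (f : (nat -> M) -> nat -> N) x y :
  chom s D f -> D x -> D y -> ceq s (f (sadd x y)) (sadd (f x) (f y)).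
Proof. by move=> [_ [_ [h _]]]; apply: h. Qed.

Lemma chom_scale (M N : lmodType R) D (f : (nat -> M) -> nat -> N) r x :
  chom s D f -> D x -> ceq s (f (sscale r x)) (sscale r (f x)).
Proof. by move=> [_ [_ [_ h]]]; apply: h. Qed.

Lemma chom_sub (M N : lmodType R) D (f : (nat -> M) -> nat -> N) x y :
  chom s D f -> D x -> D (sscale (-1) y) -> D y ->
  ceq s (f (ssub x y)) (ssub (f x) (f y)).
Proof.
move=> hf Dx Dy' Dy; apply: ceq_trans (chom_add hf Dx Dy') _.
exact: ceqD (ceq_refl _) (chom_scale _ hf Dy).
Qed.

Lemma csubmod_cauchy (M : lmodType R) D (x : nat -> M) : csubmod s D -> D x -> cauchy s x.
Proof. by move=> [h _]; apply: h. Qed.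

Lemma csubmod_add (M : lmodType R) D (x y : nat -> M) :
  csubmod s D -> D x -> D y -> D (sadd x y).
Proof. by move=> [_ [_ [_ [h _]]]]; apply: h. Qed.

Lemma csubmod_scale (M : lmodType R) D r (x : nat -> M) :
  csubmod s D -> D x -> D (sscale r x).
Proof. by move=> [_ [_ [_ [_ h]]]]; apply: h. Qed.

Lemma csubmod_sub (M : lmodType R) D (x y : nat -> M) :
  csubmod s D -> D x -> D y -> D (ssub x y).
Proof. by move=> hD Dx Dy; apply: csubmod_add hD Dx (csubmod_scale _ hD Dy). Qed.

End Completion.

Section Submodule.
Variables (R : comPzRingType) (M : lmodType R) (P : M -> Prop).
Hypothesis hP : is_submod P.

Lemma submod0 : P 0.
Proof. by case: hP. Qed.

Lemma submodD x y : P x -> P y -> P (x + y).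
Proof. by case: hP => _ [h _]; apply: h. Qed.

Lemma submodZ r x : P x -> P (r *: x).
Proof. by case: hP => _ [_ h]; apply: h. Qed.

Lemma submodB x y : P x -> P y -> P (x - y).
Proof. by move=> Px Py; rewrite -scaleN1r; apply: submodD Px (submodZ _ Py). Qed.

End Submodule.

Lemma direct_summand_scale (R : comPzRingType) (M : lmodType R) (P : M -> Prop) r e w :
  direct_summand P -> P e -> e = r *: w -> exists a, P a /\ e = r *: a.
Proof.
move=> [hP [Q [hQ [PQ0 PQ]]]] Pe ew.
have [a [b [Pa [Qb wab]]]] := PQ w.
exists a; split=> //.
have rb0 : r *: b = 0.
  apply: PQ0 _ _ (submodZ hQ r Qb).
  have -> : r *: b = e - r *: a by rewrite ew wab scalerDr addrC addKr.
  exact: submodB hP _ _ Pe (submodZ hP _ Pa).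
by rewrite ew wab scalerDr rb0 addr0.
Qed.

Lemma sum_scale_uniq_support (R : comPzRingType) (E : lmodType R) (T : eqType)
  (b : T -> E) (r : seq (R * T)) :
  exists ts (c : T -> R), uniq ts /\ \sum_(p <- r) p.1 *: b p.2 = \sum_(t <- ts) c t *: b t.
Proof.
elim: r => [|[a t] r [ts [c [ts_uniq IH]]]]; first by exists [::], (fun _ => 0); rewrite !big_nil.
rewrite big_cons /= IH; case: (boolP (t \in ts)) => t_ts.
  exists ts, (fun u => if u == t then c t + a else c u); split=> //.
  rewrite (bigD1_seq t t_ts ts_uniq) /= [RHS](bigD1_seq t t_ts ts_uniq) /= eqxx scalerDl.
  rewrite addrA [a *: _ + _]addrC; congr (_ + _).
  by apply: eq_bigr => u /negPf ->.
exists (t :: ts), (fun u => if u == t then a else c u); split; first by rewrite /= t_ts.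
rewrite big_cons eqxx; congr (_ + _).
rewrite !big_seq; apply: eq_bigr => u u_ts.
by case: eqP => // ut; move: t_ts; rewrite -ut u_ts.
Qed.

Lemma free_basis_torsion_free (R : comPzRingType) (s : nat -> R) (E : lmodType R) (T : eqType)
  (b : T -> E) : free_basis b -> S_torsion_free s R^o -> S_torsion_free s E.
Proof.
move=> [b_span b_free] Rtf n x sx0.
have [r xr] := b_span x; have [ts [c [ts_uniq rc]]] := sum_scale_uniq_support b r.
have c0 t : t \in ts -> c t = 0.
  move=> t_ts; apply: (Rtf n); apply: (b_free ts (fun t => s n * c t) ts_uniq _ t t_ts).
  under eq_bigr do rewrite -scalerA.
  by rewrite -scaler_sumr -rc -xr.
by rewrite xr rc big_seq big1 // => t /c0 ->; rewrite scale0r.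
Qed.

Section Pair.
Variables (R : comPzRingType) (s : nat -> R) (E H : lmodType R).
Implicit Types (x y : nat -> (E * H)%type).

Lemma ceq_pair x y : ceq s (fun n => (x n).1) (fun n => (y n).1) ->
  ceq s (fun n => (x n).2) (fun n => (y n).2) -> ceq s x y.
Proof.
move=> h1 h2 k; case: (h1 k) (h2 k) => N1 e1 [N2 e2].
exists (maxn N1 N2) => n; rewrite geq_max => /andP[/e1 [a ea] /e2 [b eb]].
exists (a, b).
have -> : x n - y n = ((x n).1 - (y n).1, (x n).2 - (y n).2) by case: (x n) (y n) => ? ? [].
by rewrite ea eb.
Qed.

Lemma cauchy_pair x : cauchy s (fun n => (x n).1) -> cauchy s (fun n => (x n).2) -> cauchy s x.
Proof.
move=> h1 h2 k; case: (h1 k) (h2 k) => N1 e1 [N2 e2].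
exists (maxn N1 N2) => n m; rewrite !geq_max => /andP[n1 n2] /andP[m1 m2].
have [[a ea] [b eb]] := (e1 n m n1 m1, e2 n m n2 m2).
exists (a, b).
have -> : x n - x m = ((x n).1 - (x m).1, (x n).2 - (x m).2) by case: (x n) (x m) => ? ? [].
by rewrite ea eb.
Qed.

End Pair.

Section Extension.
Variables (R : comPzRingType) (s : nat -> R) (E H : lmodType R).
Local Notation q := (qS s).
Hypothesis hS : mult_closed_seq s.
Hypothesis hEtf : S_torsion_free s E.
Variables (H' : H -> Prop) (E' : E -> Prop) (Dom : (nat -> E * H) -> Prop).
Hypotheses (hH' : is_submod H') (hE' : direct_summand E') (hDom : csubmod s Dom).
Hypothesis hE'Dom : forall e, E' e -> Dom (sconst (e, 0)).
Hypothesis hDomEH' : forall d, Dom d ->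
  exists h, H' h /\ ceq s (fun n => (d n).2) (sconst h).
Hypothesis hDompure : forall n d, Dom d ->
  (exists x, cauchy s x /\ (exists h, H' h /\ ceq s (fun k => (x k).2) (sconst h))
             /\ ceq s d (sscale (s n) x)) ->
  exists d', Dom d' /\ ceq s d (sscale (s n) d').
Hypothesis hpiDom : forall h, H' h ->
  exists d, Dom d /\ ceq s (fun n => (d n).2) (sconst h).
Hypothesis hDomE'H' : forall d, Dom d ->
  exists y : nat -> E, (forall n, E' (y n)) /\ cauchy s y /\ ceq s (fun n => (d n).1) y.
Variables (phi : (nat -> E * H) -> (nat -> E * H)) (hphi : chom s Dom phi).

Definition hatE'H' (x : nat -> E * H) :=
  cauchy s x /\
  (exists y : nat -> E, (forall n, E' (y n)) /\ cauchy s y /\ ceq s (fun n => (x n).1) y) /\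
  (exists h, H' h /\ ceq s (fun n => (x n).2) (sconst h)).

Lemma hatE'H'_add x y : hatE'H' x -> hatE'H' y -> hatE'H' (sadd x y).
Proof.
move=> [x_cauchy [[y1 [E'y1 [y1_cauchy xy1]]] [h1 [H'h1 xh1]]]].
move=> [y_cauchy [[y2 [E'y2 [y2_cauchy yy2]]] [h2 [H'h2 yh2]]]].
split; first exact: cauchyD.
split.
  exists (sadd y1 y2); split; first by move=> n; exact: (submodD hE'.1 (E'y1 n) (E'y2 n)).
  by split; [apply: cauchyD | apply: ceqD].
exists (h1 + h2); split; first exact: (submodD hH' H'h1 H'h2).
by apply: ceq_trans (ceqD xh1 yh2) _; apply: ceq_refl.
Qed.

Lemma hatE'H'_scale r x : hatE'H' x -> hatE'H' (sscale r x).
Proof.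
move=> [x_cauchy [[y [E'y [y_cauchy xy]]] [h [H'h xh]]]].
split; first exact: cauchyZ.
split.
  exists (sscale r y); split; first by move=> n; exact: (submodZ hE'.1 r (E'y n)).
  by split; [apply: cauchyZ | apply: ceqZ].
exists (r *: h); split; first exact: (submodZ hH' r H'h).
by apply: ceq_trans (ceqZ r xh) _; apply: ceq_refl.
Qed.

Lemma hatE'H'_sub x y : hatE'H' x -> hatE'H' y -> hatE'H' (ssub x y).
Proof. by move=> hx hy; apply: hatE'H'_add hx (hatE'H'_scale _ hy). Qed.

Lemma hatE'H'_Dom d : Dom d -> hatE'H' d.
Proof.
by move=> Dd; split; [apply: csubmod_cauchy hDom Dd | split; [apply: hDomE'H' | apply: hDomEH']].
Qed.

Lemma E'_tail_div u k : (forall n, E' (u n)) -> cauchy s u ->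
  exists N (a : nat -> E), [/\ forall n, E' (a n), cauchy s a &
    forall n, (N <= n)%N -> u n - u N = q k *: a n].
Proof.
move=> E'u u_cauchy; have [N hN] := u_cauchy k.
have tail_div n : exists a, E' a /\ ((N <= n)%N -> u n - u N = q k *: a).
  case: (leqP N n) => [Nn | nN].
    have [w uw] := hN n N Nn (leqnn N).
    have [a [E'a ua]] := direct_summand_scale hE' (submodB hE'.1 (E'u n) (E'u N)) uw.
    by exists a.
  by exists 0; split=> //; apply: submod0 hE'.1.
have [a ha] := choice _ tail_div.
exists N, a; split=> [n | | n]; try by case: (ha n).
apply: (@cauchy_divq _ _ _ hS hEtf k N (fun n => u n - u N)) => [n Nn|].
  by case: (ha n) => _ ->.
exact: cauchyD u_cauchy (cauchy_const _ _).
Qed.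

Lemma Dom_dense x k : hatE'H' x ->
  exists d, Dom d /\ exists z, hatE'H' z /\ ceq s (ssub x d) (sscale (q k) z).
Proof.
move=> [_ [[y [E'y [y_cauchy xy]]] [h [H'h xh]]]].
have [d0 [Dd0 d0h]] := hpiDom H'h.
have [y0 [E'y0 [y0_cauchy d0y0]]] := hDomE'H' Dd0.
have E'u n : E' (ssub y y0 n) by rewrite ssubE; exact: (submodB hE'.1 (E'y n) (E'y0 n)).
have [N [a [E'a a_cauchy ua]]] := E'_tail_div k E'u (cauchyD y_cauchy (cauchyZ (-1) y0_cauchy)).
(* [d0] matches the H'-part of [x]; shifting it by the element [ssub y y0 N] of E'
   makes the E-part of the difference divisible by [q k] inside E' from [N] on. *)
exists (sadd d0 (sconst (ssub y y0 N, 0))); split.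
  exact: csubmod_add hDom Dd0 (hE'Dom (E'u N)).
exists (fun n => (a n, 0)); split.
  split; first by apply: cauchy_pair; [exact: a_cauchy | exact: (cauchy_const s (0 : H))].
  split; first by exists a; split=> //; split=> //; apply: ceq_refl.
  by exists 0; split; [exact: (submod0 hH') | apply: ceq_refl].
apply: ceq_pair.
  apply: ceq_trans (_ : ceq s _ (ssub (fun n => (x n).1)
                        (sadd (fun n => (d0 n).1) (sconst (ssub y y0 N))))) _.
    by apply: ceq_pointwise => n; rewrite !ssubE.
  apply: ceq_trans (ceq_ssub xy (ceqD d0y0 (ceq_refl s _))) _.
  apply: ceq_eventually; exists N => n Nn.
  by rewrite /sscale /= -ua // !ssubE /sadd /sconst opprD addrA.
apply: ceq_trans (_ : ceq s _ (ssub (fun n => (x n).2)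
                      (sadd (fun n => (d0 n).2) (sconst 0)))) _.
  by apply: ceq_pointwise => n; rewrite !ssubE.
apply: ceq_trans (ceq_ssub xh (ceqD d0h (ceq_refl s _))) _.
by apply: ceq_pointwise => n; rewrite ssubE /sadd /sconst addr0 subrr /sscale /= scaler0.
Qed.

Lemma phi_continuous d d' z k : Dom d -> Dom d' -> hatE'H' z ->
  ceq s (ssub d d') (sscale (q k) z) -> ev_qM s k (ssub (phi d) (phi d')).
Proof.
move=> Dd Dd' [z_cauchy [_ z_H']] dd'z.
have [m q_k] := qS_in_S hS k; rewrite q_k in dd'z.
have Ddd' := csubmod_sub hDom Dd Dd'.
have [d'' [Dd'' dd'd'']] := @hDompure m _ Ddd' (ex_intro _ z (conj z_cauchy (conj z_H' dd'z))).
apply: (@ev_qM_ceq_scale _ _ _ _ _ (phi d'')); rewrite q_k.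
apply: ceq_trans (ceq_sym (chom_sub hphi Dd (csubmod_scale _ hDom Dd') Dd')) _.
apply: ceq_trans (chom_ceq hphi Ddd' (csubmod_scale _ hDom Dd'') dd'd'') _.
exact: chom_scale hphi Dd''.
Qed.

(* [v] represents the value at [x] of the extension: it is the S-adic limit of
   [phi d] as [d] runs through approximations of [x] from [Dom]. *)
Definition ext_value (x v : nat -> E * H) :=
  cauchy s v /\ forall k, exists d, Dom d /\
    (exists z, hatE'H' z /\ ceq s (ssub x d) (sscale (q k) z)) /\
    ev_qM s k (ssub v (phi d)).

Lemma ext_value_uniq x v w : ext_value x v -> ext_value x w -> ceq s v w.
Proof.
move=> [_ hv] [_ hw] k.
have [d1 [Dd1 [[z1 [z1_in xd1]] vd1]]] := hv k.
have [d2 [Dd2 [[z2 [z2_in xd2]] wd2]]] := hw k.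
have d1d2 : ev_qM s k (ssub (phi d1) (phi d2)).
  apply: (phi_continuous Dd1 Dd2 (hatE'H'_sub z2_in z1_in)).
  apply: ceq_trans (_ : ceq s _ (ssub (ssub x d2) (ssub x d1))) _.
    by apply: ceq_pointwise => n; rewrite !ssubE subrBB.
  apply: ceq_trans (ceq_ssub xd2 xd1) _.
  by apply: ceq_pointwise => n; rewrite /sscale !ssubE -scalerBr.
apply: eq_ev_qM (ev_qMD (ev_qMD vd1 d1d2) (ev_qMN wd2)) => n.
by rewrite !ssubE -subr_tri.
Qed.

Lemma ext_value_ceq x y v : ext_value x v -> ceq s x y -> ext_value y v.
Proof.
move=> [v_cauchy hv] xy; split=> // k.
have [d [Dd [[z [z_in xdz]] vd]]] := hv k.
exists d; split=> //; split=> //; exists z; split=> //.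
by apply: ceq_trans xdz; apply: ceq_ssub; [apply: ceq_sym | apply: ceq_refl].
Qed.

Lemma ext_value_add x y v w :
  ext_value x v -> ext_value y w -> ext_value (sadd x y) (sadd v w).
Proof.
move=> [v_cauchy hv] [w_cauchy hw]; split=> [|k]; first exact: cauchyD.
have [d1 [Dd1 [[z1 [z1_in xd1]] vd1]]] := hv k.
have [d2 [Dd2 [[z2 [z2_in yd2]] wd2]]] := hw k.
exists (sadd d1 d2); split; first exact: csubmod_add hDom Dd1 Dd2.
split.
  exists (sadd z1 z2); split; first exact: hatE'H'_add.
  apply: ceq_trans (_ : ceq s _ (sadd (ssub x d1) (ssub y d2))) _.
    by apply: ceq_pointwise => n; rewrite /sadd !ssubE opprD addrACA.
  apply: ceq_trans (ceqD xd1 yd2) _.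
  by apply: ceq_pointwise => n; rewrite /sadd /sscale scalerDr.
apply: ev_qM_ceq (ev_qMD vd1 wd2) _.
apply: ceq_trans (_ : ceq s _ (ssub (sadd v w) (sadd (phi d1) (phi d2)))) _.
  by apply: ceq_pointwise => n; rewrite /sadd !ssubE opprD addrACA.
exact: ceq_ssub (ceq_refl s _) (ceq_sym (chom_add hphi Dd1 Dd2)).
Qed.

Lemma ext_value_scale r x v : ext_value x v -> ext_value (sscale r x) (sscale r v).
Proof.
move=> [v_cauchy hv]; split=> [|k]; first exact: cauchyZ.
have [d [Dd [[z [z_in xdz]] vd]]] := hv k.
exists (sscale r d); split; first exact: csubmod_scale _ hDom Dd.
split.
  exists (sscale r z); split; first exact: hatE'H'_scale.
  apply: ceq_trans (_ : ceq s _ (sscale r (ssub x d))) _.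
    by apply: ceq_pointwise => n; rewrite /sscale !ssubE scalerBr.
  apply: ceq_trans (ceqZ r xdz) _.
  by apply: ceq_pointwise => n; rewrite /sscale !scalerA mulrC.
apply: ev_qM_ceq (ev_qMZ r vd) _.
apply: ceq_trans (_ : ceq s _ (ssub (sscale r v) (sscale r (phi d)))) _.
  by apply: ceq_pointwise => n; rewrite /sscale !ssubE scalerBr.
exact: ceq_ssub (ceq_refl s _) (ceq_sym (chom_scale r hphi Dd)).
Qed.

Lemma ext_value_Dom d : Dom d -> ext_value d (phi d).
Proof.
move=> Dd; split=> [|k]; first exact: chom_cauchy hphi Dd.
exists d; split=> //; split.
  exists (sscale 0 d); split; first exact: hatE'H'_scale (hatE'H'_Dom Dd).
  by apply: ceq_pointwise => n; rewrite ssubE /sscale subrr !scale0r scaler0.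
by exists 0%N => n _; rewrite ssubE subrr; apply: in_qM0.
Qed.

Lemma ext_value_exists x : hatE'H' x -> exists v, ext_value x v.
Proof.
move=> x_in; have [D hD] := choice _ (fun k => Dom_dense k x_in).
have D_step k : ev_qM s k (fun m => phi (D k.+1) m - phi (D k) m).
  have [Dk [zk [zk_in xDk]]] := hD k; have [Dk1 [zk1 [zk1_in xDk1]]] := hD k.+1.
  apply: eq_ev_qM (fun n => ssubE _ _ n) _.
  apply: (phi_continuous Dk1 Dk (hatE'H'_sub zk_in (hatE'H'_scale (s k) zk1_in))).
  apply: ceq_trans (_ : ceq s _ (ssub (ssub x (D k)) (ssub x (D k.+1)))) _.
    by apply: ceq_pointwise => n; rewrite !ssubE subrBB.
  apply: ceq_trans (ceq_ssub xDk xDk1) _.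
  by apply: ceq_pointwise => n; rewrite /sscale !ssubE /sscale qS_S scalerBr scalerA.
have [v [v_cauchy hv]] :=
  cauchy_diagonal_limit (fun k => chom_cauchy hphi (hD k).1) D_step.
exists v; split=> // k; have [Dk xDk] := hD k.
exists (D k); split=> //; split=> //.
by apply: eq_ev_qM (hv k) => n; rewrite ssubE.
Qed.

Lemma ext_value_hom psi x : chom s hatE'H' psi ->
  (forall d, Dom d -> ceq s (psi d) (phi d)) -> hatE'H' x -> ext_value x (psi x).
Proof.
move=> hpsi psi_phi x_in; split=> [|k]; first exact: chom_cauchy hpsi x_in.
have [d [Dd [z [z_in xdz]]]] := Dom_dense k x_in.
exists d; split=> //; split; first by exists z.
apply: (@ev_qM_ceq_scale _ _ _ _ _ (psi z)).
have d_in := hatE'H'_Dom Dd.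
apply: ceq_trans (_ : ceq s _ (ssub (psi x) (psi d))) _.
  exact: ceq_ssub (ceq_refl s _) (ceq_sym (psi_phi d Dd)).
apply: ceq_trans (ceq_sym (chom_sub hpsi x_in (hatE'H'_scale _ d_in) d_in)) _.
apply: ceq_trans (chom_ceq hpsi (hatE'H'_sub x_in d_in) (hatE'H'_scale _ z_in) xdz) _.
exact: chom_scale hpsi z_in.
Qed.

Lemma exists_unique_extension : exists phihat : (nat -> E * H) -> (nat -> E * H),
  chom s hatE'H' phihat /\ (forall d, Dom d -> ceq s (phihat d) (phi d)) /\
  (forall psi : (nat -> E * H) -> (nat -> E * H),
     chom s hatE'H' psi -> (forall d, Dom d -> ceq s (psi d) (phi d)) ->
     forall x, hatE'H' x -> ceq s (psi x) (phihat x)).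
Proof.
pose phihat x := epsilon (inhabits (fun _ : nat => (0 : E * H))) (ext_value x).
have phihatP x : hatE'H' x -> ext_value x (phihat x).
  by move=> x_in; apply: epsilon_spec; apply: ext_value_exists.
exists phihat; split; [split; [|split; [|split]] | split].
- by move=> x /phihatP [].
- move=> x y x_in y_in xy; apply: ext_value_uniq (phihatP y y_in).
  exact: ext_value_ceq (phihatP x x_in) xy.
- move=> x y x_in y_in; apply: ext_value_uniq (phihatP _ (hatE'H'_add x_in y_in)) _.
  exact: ext_value_add (phihatP x x_in) (phihatP y y_in).
- move=> r x x_in; apply: ext_value_uniq (phihatP _ (hatE'H'_scale r x_in)) _.
  exact: ext_value_scale (phihatP x x_in).
- by move=> d Dd; apply: ext_value_uniq (phihatP _ (hatE'H'_Dom Dd)) (ext_value_Dom Dd).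
- move=> psi hpsi psi_phi x x_in.
  exact: ext_value_uniq (ext_value_hom hpsi psi_phi x_in) (phihatP x x_in).
Qed.

End Extension.

(* B = E (+) H is the product module E * H, so \hat B = \hat E (+) \hat H; an
   element of \hat B is represented by a Cauchy sequence x : nat -> E * H,
   pi x = (fun n => (x n).2), and H is embedded in \hat H by constants. *)
Theorem lemma4p3
  (R : comPzRingType) (s : nat -> R)
  (hS : mult_closed_seq s)
  (hRred : S_reduced s R^o) (hRtf : S_torsion_free s R^o)
  (hRctf : cotorsion_free s R^o)
  (* lambda = |L| infinite, lambda^aleph0 = lambda > |R| *)
  (L : eqType)
  (hLinf : exists f : nat -> L, injective f)
  (hLpow : exists f : (nat -> L) -> L, bijective f)
  (hRL : card_lt R L)
  (* E free with basis T = finite sequences in lambda *)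
  (E : lmodType R) (b : seq L -> E) (hb : free_basis b)
  (* H cotorsion-free with |H| < lambda *)
  (H : lmodType R) (hH : cotorsion_free s H) (hHL : card_lt H L)
  (* H' pure in H, E' direct summand of E *)
  (H' : H -> Prop) (hH' : pure_submod s H')
  (E' : E -> Prop) (hE' : direct_summand E')
  (* Dom(phi), a submodule of \hat B *)
  (Dom : (nat -> E * H) -> Prop) (hDom : csubmod s Dom)
  (* E' \subseteq Dom(phi) *)
  (hE'Dom : forall e, E' e -> Dom (sconst (e, 0)))
  (* E' pure in Dom(phi) *)
  (hE'pure : forall n e, E' e ->
      (exists d, Dom d /\ ceq s (sconst (e, 0)) (sscale (s n) d)) ->
      exists e', E' e' /\ e = s n *: e')
  (* Dom(phi) \subseteq \hat E (+) H' *)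
  (hDomEH' : forall d, Dom d ->
      exists h, H' h /\ ceq s (fun n => (d n).2) (sconst h))
  (* Dom(phi) pure in \hat E (+) H' *)
  (hDompure : forall n d, Dom d ->
      (exists x, cauchy s x /\ (exists h, H' h /\ ceq s (fun k => (x k).2) (sconst h))
                 /\ ceq s d (sscale (s n) x)) ->
      exists d', Dom d' /\ ceq s d (sscale (s n) d'))
  (* pi(Dom(phi)) = H' *)
  (hpiDom : forall h, H' h -> exists d, Dom d /\ ceq s (fun n => (d n).2) (sconst h))
  (* Dom(phi) \subseteq \hat{E'} (+) H', implicit in "extension to \hat{E'} (+) H'" *)
  (hDomE'H' : forall d, Dom d ->
      exists y : nat -> E, (forall n, E' (y n)) /\ cauchy s y /\
                           ceq s (fun n => (d n).1) y)
  (* phi : Dom(phi) -> \hat E (+) H, an R-homomorphism *)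
  (phi : (nat -> E * H) -> (nat -> E * H))
  (hphi : chom s Dom phi)
  (hphiH : forall d, Dom d -> exists h, ceq s (fun n => (phi d n).2) (sconst h)) :
  let E'H' := fun x : nat -> E * H =>
      cauchy s x /\
      (exists y : nat -> E, (forall n, E' (y n)) /\ cauchy s y /\
                            ceq s (fun n => (x n).1) y) /\
      (exists h, H' h /\ ceq s (fun n => (x n).2) (sconst h)) in
  exists phihat : (nat -> E * H) -> (nat -> E * H),
    chom s E'H' phihat /\
    (forall d, Dom d -> ceq s (phihat d) (phi d)) /\
    (forall psi : (nat -> E * H) -> (nat -> E * H),
       chom s E'H' psi -> (forall d, Dom d -> ceq s (psi d) (phi d)) ->
       forall x, E'H' x -> ceq s (psi x) (phihat x)).
Proof.
move=> E'H'.
exact: (exists_unique_extension hS (free_basis_torsion_free hb hRtf) hH'.1 hE' hDom hE'Dom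
  hDomEH' hDompure hpiDom hDomE'H' hphi).
Qed.
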